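(* Let $G$ be a finite group with $|G|\ge3$ and let $\mathcal C=\mathcal C(\mathcal B(G),\mathcal F(G))$. Then (1) $\mathsf D(G)\le\omega(G)\le\mathsf D(G)+\mathsf d(\mathcal C)$; (2) $\mathsf D(G/G')\le\mathsf D(\mathcal C)$, with equality if $G$ is abelian.
   Context: For a finite group $G$ (multiplicative, identity $1_G$, commutator subgroup $G'$), $\mathcal F(G)$ is the free abelian monoid with basis $G$ (sequences $S=g_1\boldsymbol{\cdot}\ldots\boldsymbol{\cdot}g_\ell$, operation $\boldsymbol{\cdot}$, length $|S|=\ell$). $\pi(S)=\{g_{\tau(1)}\cdots g_{\tau(\ell)}:\tau\text{ a permutation of }[1,\ell]\}$, $\pi$ of the empty sequence is $\{1_G\}$, $\mathcal B(G)=\{S\in\mathcal F(G):1_G\in\pi(S)\}$, $\mathcal A(G)$ its set of atoms, and $\mathsf D(G)=\max\{|U|:U\in\mathcal A(G)\}$ (applied to the group $G/G'$ this defines $\mathsf D(G/G')$). For $S,S'\in\mathcal F(G)$, $S\sim S'$ means: for all $T\in\mathcal F(G)$, $S\boldsymbol{\cdot}T\in\mathcal B(G)\iff S'\boldsymbol{\cdot}T\in\mathcal B(G)$; the classes form the class semigroup $\mathcal C(\mathcal B(G),\mathcal F(G))$, written additively with $[S]+[T]=[S\boldsymbol{\cdot}T]$. For an atomic monoid $H$ and $b\in H$, $\omega(H,b)$ is the smallest $N\in\mathbb N_0\cup\{\infty\}$ such that whenever $b\mid a_1\cdots a_n$ in $H$ ($a_i\in H$) there is $\Omega\subset[1,n]$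 with $|\Omega|\le N$ and $b\mid\prod_{\nu\in\Omega}a_\nu$ in $H$; $\omega(H)=\sup\{\omega(H,u):u\in\mathcal A(H)\}$ and $\omega(G)=\omega(\mathcal B(G))$. For an additive commutative semigroup $\mathcal C$ with zero (empty sums equal $0$): $\mathsf d(\mathcal C)$ is the smallest $d\in\mathbb N_0\cup\{\infty\}$ such that for all $c_1,\dots,c_n\in\mathcal C$ there is $\Omega\subset[1,n]$, $|\Omega|\le d$, with $\sum_{\nu=1}^n c_\nu=\sum_{\nu\in\Omega}c_\nu$; $\mathsf D(\mathcal C)$ is the smallest $\ell\in\mathbb N\cup\{\infty\}$ such that for all $n\ge\ell$ and $c_1,\dots,c_n\in\mathcal C$ there is $\Omega\subsetneq[1,n]$ with $\sum_{\nu=1}^n c_\nu=\sum_{\nu\in\Omega}c_\nu$. *)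

From HB Require Import structures.
From mathcomp Require Import all_boot all_fingroup.
From Stdlib Require Import ClassicalEpsilon.
Set Implicit Arguments. Unset Strict Implicit. Unset Printing Implicit Defensive.

(* Extended naturals N_0 ∪ {∞}: [None] is ∞. *)
Definition enat := option nat.

Definition le_enat (a b : enat) : Prop :=
  match a, b with
  | _, None => True
  | None, Some _ => False
  | Some m, Some n => (m <= n)%N
  end.

Definition add_enat (a b : enat) : enat :=
  match a, b with
  | Some m, Some n => Some (m + n)%N
  | _, _ => None
  end.

Definition infN (P : nat -> Prop) : enat :=
  if excluded_middle_informative (exists n, P n)
  then Some (epsilon (inhabits 0%N) (fun n => P n /\ forall m, P m -> (n <= m)%N))
  else None.

Section Seqs.
Variable gT : finGroupType.
Local Open Scope group_scope.

(* Elements of F(G) are represented by lists, considered up to permutation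
   (perm_eq); [++] is the monoid operation, [size] the length. *)

(* S ∈ B(G): 1 ∈ π(S) *)
Definition inB (S : seq gT) : Prop :=
  exists2 t : seq gT, perm_eq t S & \prod_(x <- t) x = 1.

(* atoms of the monoid B(G) (its only unit is the empty sequence) *)
Definition atomB (U : seq gT) : Prop :=
  [/\ inB U, U <> [::] &
      forall V W, inB V -> inB W -> perm_eq U (V ++ W) -> V = [::] \/ W = [::]].

Definition Davenport : enat :=
  infN (fun n => forall U, atomB U -> (size U <= n)%N).

Definition dvdB (b a : seq gT) : Prop :=
  exists2 c, inB c & perm_eq a (b ++ c).

Definition catall n (S : 'I_n -> seq gT) (A : {set 'I_n}) : seq gT :=
  flatten [seq S i | i <- enum A].

Definition omega_elt (b : seq gT) : enat :=
  infN (fun N => forall n (a : 'I_n -> seq gT),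
          (forall i, inB (a i)) -> dvdB b (catall a setT) ->
          exists Om : {set 'I_n}, (#|Om| <= N)%N /\ dvdB b (catall a Om)).

Definition omegaG : enat :=
  infN (fun N => forall u, atomB u -> le_enat (omega_elt u) (Some N)).

(* S ~ S' : the congruence defining the class semigroup C(B(G), F(G)) *)
Definition simB (S S' : seq gT) : Prop :=
  forall T, inB (S ++ T) <-> inB (S' ++ T).

(* Elements of C are classes [S_i]; [S]+[T] = [S ++ T]; equality is simB.
   small d(C): *)
Definition small_d_C : enat :=
  infN (fun d => forall n (S : 'I_n -> seq gT),
          exists Om : {set 'I_n}, (#|Om| <= d)%N /\ simB (catall S setT) (catall S Om)).

Definition big_D_C : enat :=
  infN (fun l => (1 <= l)%N /\
          forall n, (l <= n)%N -> forall S : 'I_n -> seq gT,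
          exists2 Om : {set 'I_n}, Om \proper setT & simB (catall S setT) (catall S Om)).
End Seqs.

From HB Require Import structures.
From mathcomp Require Import all_boot all_fingroup all_solvable zify.
From Stdlib Require Import Classical ClassicalEpsilon.
Set Implicit Arguments. Unset Strict Implicit. Unset Printing Implicit Defensive.

(* An atom U = g_1 ... g_l with l >= 3 divides the product of the pairs
   g_i g_i^-1 but no proper subproduct of them, so omega(U) >= |U|; since
   |G| >= 3 there is an atom of length 3, so shorter atoms do not matter.
   Conversely, if an atom U divides a_1 ... a_n, at most |U| of the a_i already
   contain U, and the class of the others is realised by at most d(C) of them.
   The class of a sequence determines its product modulo G', so a proper
   subfamily equivalent to the family of lifts of a long atom of G/G' would
   split that atom.  When G is abelian the class is determined by the product
   itself, and any D(G) elements contain a nonempty zero-sum subfamily, which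
   can be dropped without changing the class. *)

Lemma ex_minimal_nat (P : nat -> Prop) n :
  P n -> exists m, P m /\ forall k, P k -> m <= k.
Proof.
elim/ltn_ind: n => n IHn Pn.
have [[m [ltmn Pm]] | noPlt] := classic (exists m, m < n /\ P m); first exact: IHn Pm.
exists n; split=> // k Pk; rewrite leqNgt; apply/negP => ltkn; apply: noPlt; by exists k.
Qed.

Lemma infN_spec (P : nat -> Prop) m : infN P = Some m -> P m.
Proof.
rewrite /infN; case: excluded_middle_informative => [[n Pn]|] // [<-].
by have [] := epsilon_spec (inhabits 0) _ (ex_minimal_nat Pn).
Qed.

Lemma infN_le (P : nat -> Prop) n : P n -> le_enat (infN P) (Some n).
Proof.
move=> Pn; rewrite /infN; case: excluded_middle_informative => [exP | []]; last by exists n.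
by case: (epsilon_spec (inhabits 0) _ (ex_minimal_nat Pn)) => _; apply.
Qed.

Lemma le_infN (P Q : nat -> Prop) :
  (forall n, Q n -> P n) -> le_enat (infN P) (infN Q).
Proof.
move=> QP; case eQ: (infN Q) => [m|]; last by case: (infN P).
exact: infN_le (QP _ (infN_spec eQ)).
Qed.

Lemma le_infN_Some (P : nat -> Prop) N :
  (forall m n, m <= n -> P m -> P n) -> le_enat (infN P) (Some N) -> P N.
Proof. by move=> Pmono; case eP: (infN P) => [m|] //= leN; apply: Pmono leN (infN_spec eP). Qed.

Lemma le_enat_anti (a b : enat) : le_enat a b -> le_enat b a -> a = b.
Proof. by case: a b => [m|] [n|] //= mn nm; congr Some; apply/anti_leq/andP. Qed.

Definition submset (T : eqType) (s1 s2 : seq T) :=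
  forall x, count_mem x s1 <= count_mem x s2.

Lemma submsetP (T : eqType) (s1 s2 : seq T) :
  submset s1 s2 <-> exists s3, perm_eq s2 (s1 ++ s3).
Proof.
split=> [/count_subseqP [s s_s2 s1s] | [s3 /seq.permP s2E] x].
  have [s3 s2E] := perm_to_subseq s_s2.
  by exists s3; apply: perm_trans s2E _; rewrite perm_cat2r perm_sym.
by rewrite s2E count_cat leq_addr.
Qed.

Lemma submset_perm (T : eqType) (s1 s2 : seq T) :
  submset s1 s2 -> size s2 <= size s1 -> perm_eq s1 s2.
Proof.
move=> /count_subseqP [s s_s2 s1s] le21.
suff /eqP <- : s == s2 by [].
by rewrite -(size_subseq_leqif s_s2).2 eqn_leq (size_subseq s_s2) -(perm_size s1s).
Qed.

Section ZeroSumSequences.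
Variable gT : finGroupType.
Local Open Scope group_scope.
Implicit Types (x y : gT) (s U V W : seq gT).

Lemma count_catall n (a : 'I_n -> seq gT) (A : {set 'I_n}) (p : pred gT) :
  count p (catall a A) = (\sum_(i in A) count p (a i))%N.
Proof. by rewrite /catall count_flatten sumnE !big_map big_enum. Qed.

Lemma size_catall n (a : 'I_n -> seq gT) (A : {set 'I_n}) :
  size (catall a A) = (\sum_(i in A) size (a i))%N.
Proof. by rewrite -count_predT count_catall; under eq_bigr do rewrite count_predT. Qed.

Lemma perm_catall_setID n (a : 'I_n -> seq gT) (A B : {set 'I_n}) :
  perm_eq (catall a A) (catall a (A :&: B) ++ catall a (A :\: B)).
Proof. by apply/seq.permP => p; rewrite count_cat !count_catall (big_setID B). Qed.

Lemma perm_catall_setC n (a : 'I_n -> seq gT) (A : {set 'I_n}) :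
  perm_eq (catall a setT) (catall a A ++ catall a (~: A)).
Proof. by have := perm_catall_setID a setT A; rewrite setTI setTD. Qed.

Lemma catallP n (a : 'I_n -> seq gT) (A : {set 'I_n}) y :
  reflect (exists2 i, i \in A & y \in a i) (y \in catall a A).
Proof.
apply: (iffP flatten_mapP) => [] [i Ai yai]; exists i => //; by rewrite ?mem_enum in Ai *.
Qed.

Lemma prod_catall n (a : 'I_n -> seq gT) (A : {set 'I_n}) :
  \prod_(y <- catall a A) y = \prod_(i <- enum A) \prod_(y <- a i) y.
Proof. by rewrite big_flatten big_map. Qed.

Lemma eq_catall n (a b : 'I_n -> seq gT) A : a =1 b -> catall a A = catall b A.
Proof. by move=> ab; rewrite /catall; congr flatten; apply: eq_map. Qed.

Definition catall1 n (g : 'I_n -> gT) := catall (fun i => [:: g i]).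

Lemma size_catall1 n (g : 'I_n -> gT) A : size (catall1 g A) = #|A|.
Proof. by rewrite size_catall sum1_card. Qed.

Lemma catall1_nth U : catall1 (fun i : 'I_(size U) => nth 1 U i) setT = U.
Proof.
rewrite /catall1 /catall enum_setT -enumT flatten_map1.
by rewrite (map_comp (nth 1 U) val) val_enum_ord -/(mkseq _ _) mkseq_nth.
Qed.

Lemma inB_perm s s' : perm_eq s s' -> inB s -> inB s'.
Proof. by move=> ss' [t ts t1]; exists t => //; apply: perm_trans ts ss'. Qed.

Lemma inB_nil : inB ([::] : seq gT).
Proof. by exists [::]; rewrite ?big_nil. Qed.

Lemma inB_cat s s' : inB s -> inB s' -> inB (s ++ s').
Proof.
move=> [t ts t1] [t' ts' t'1]; exists (t ++ t'); first by rewrite perm_cat.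
by rewrite big_cat /= t1 t'1 mulg1.
Qed.

Lemma inB_catall n (a : 'I_n -> seq gT) A : (forall i, inB (a i)) -> inB (catall a A).
Proof.
move=> aB; rewrite /catall; elim: (enum A) => [|i r IHr] /=; first exact: inB_nil.
exact: inB_cat.
Qed.

Lemma prod_rev_map_invg s : \prod_(y <- rev (map invg s)) y = (\prod_(y <- s) y)^-1.
Proof.
elim: s => [|x s IHs]; first by rewrite big_nil invg1.
by rewrite /= rev_cons big_rcons IHs big_cons invMg.
Qed.

Lemma inB_map_invg s : inB s -> inB (map invg s).
Proof.
move=> [t ts t1]; exists (rev (map invg t)); last by rewrite prod_rev_map_invg t1 invg1.
by rewrite perm_rev; apply: perm_map.
Qed.

Lemma inB_pair x : inB [:: x; x^-1].
Proof. by exists [:: x; x^-1]; rewrite // !big_cons big_nil mulg1 mulgV. Qed.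

Lemma inB_rcons_prodV s : inB (rcons s (\prod_(y <- s) y)^-1).
Proof.
exists (rcons s (\prod_(y <- s) y)^-1) => //.
by rewrite -cats1 big_cat big_seq1 /= mulgV.
Qed.

Lemma inB_seq1 x : inB [:: x] -> x = 1.
Proof.
move=> [t tx]; have := perm_size tx.
case: t tx => [|y [|? ?]] //= yx _; rewrite big_seq1 => y1.
by move: (perm_mem yx y); rewrite !mem_seq1 eqxx y1 eq_sym => /esym /eqP.
Qed.

Lemma not_atomB s : inB s -> s <> [::] -> ~ atomB s ->
  exists V W, [/\ inB V, inB W, perm_eq s (V ++ W), V <> [::] & W <> [::]].
Proof.
move=> sB s0 s_natom; apply: NNPP => noVW; apply: s_natom; split=> // V W VB WB sVW.
by apply: NNPP => /not_or_and [V0 W0]; apply: noVW; exists V, W.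
Qed.

Lemma atomB_seq1 : atomB [:: 1 : gT].
Proof.
split=> [|//|V W _ _ /perm_size]; first by exists [:: 1]; rewrite ?big_seq1.
by rewrite size_cat; case: V => [|v V]; [left | case: W => [|w W]; [right | rewrite addnS]].
Qed.

Lemma atomB_small U : inB U -> U <> [::] -> size U <= 3 -> 1 \notin U -> atomB U.
Proof.
move=> UB Unil U3 U1; split=> // V W VB WB UVW.
have entry1 z T : inB (z :: T) -> z \in U -> T = [::] -> False.
  by move=> + zU T0; rewrite T0 => /inB_seq1 z1; rewrite -z1 zU in U1.
case: V VB UVW => [|v V] VB UVW; first by left.
case: W WB UVW => [|w W] WB UVW; first by right.
have /orP [/nilP V0 | /nilP W0] : (size V == 0) || (size W == 0).
  by move: (perm_size UVW) U3; rewrite size_cat /=; lia.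
- by case: (entry1 v V) => //; rewrite (perm_mem UVW) mem_head.
- by case: (entry1 w W) => //; rewrite (perm_mem UVW) mem_cat mem_head orbT.
Qed.

Lemma exists_atomB_size3 : 3 <= #|[set: gT]| -> exists U, atomB U /\ size U = 3.
Proof.
move=> G3.
have notin_small (A : {set gT}) : #|A| < 3 -> exists y, y \notin A.
  move=> A3; have /subsetPn [y _ yA] : ~~ ([set: gT] \subset A).
    by apply: contraTN G3 => /subset_leq_card leGA; rewrite -ltnNge (leq_ltn_trans leGA).
  by exists y.
have [x] := notin_small [set 1] ltac:(by rewrite cards1); rewrite inE => x1.
have [y] := notin_small [set 1; x^-1] ltac:(by rewrite cards2; case: (_ != _)).
rewrite !inE negb_or => /andP [y1 yxV].
exists [:: x; y; (x * y)^-1]; split=> //; apply: atomB_small => //.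
- by exists [:: x; y; (x * y)^-1]; rewrite // !big_cons big_nil mulg1 mulgA mulgV.
- by rewrite !inE ![1 == _]eq_sym (negbTE x1) (negbTE y1) /= eq_invg1 -eq_invg_mul eq_sym.
Qed.

Lemma submset_catall_cover U n (a : 'I_n -> seq gT) :
  submset U (catall a setT) ->
  exists Om : {set 'I_n}, #|Om| <= size U /\ submset U (catall a Om).
Proof.
elim: U => [|x U IHU] Ua; first by exists set0; rewrite cards0.
have [Om [OmU UOm]] := IHU (fun y => leq_trans (leq_addl _ _) (Ua y)).
have [ltxOm | lexU] := ltnP (count_mem x U) (count_mem x (catall a Om)).
  exists Om; split=> [|y /=]; first exact: leqW.
  by case: eqP => [<- | _]; [rewrite add1n | exact: UOm].
have [i iOm xai] : exists2 i, i \in ~: Om & x \in a i.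
  apply/catallP; rewrite -has_pred1 has_count.
  move: (Ua x); rewrite /= eqxx add1n (seq.permP (perm_catall_setC a Om)) count_cat => ltxU.
  by rewrite lt0n; apply: contraTneq ltxU => ->; rewrite addn0 -ltnNge ltnS.
have x_ai : 0 < count_mem x (a i) by rewrite -has_count has_pred1.
rewrite inE in iOm; exists (i |: Om); split; first by rewrite cardsU1 iOm /= add1n.
move=> y; rewrite count_catall big_setU1 // -count_catall /=.
case: eqP => [<- | _]; first exact: leq_add x_ai (UOm x).
exact: leq_trans (UOm y) (leq_addl _ _).
Qed.

Lemma submset_catall1 V n (c : 'I_n -> gT) :
  submset V (catall1 c setT) -> exists Om : {set 'I_n}, perm_eq V (catall1 c Om).
Proof.
move=> /submset_catall_cover [Om [OmV VOm]]; exists Om.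
by apply: submset_perm VOm _; rewrite size_catall1.
Qed.

Definition davenport_bound N := forall U : seq gT, atomB U -> size U <= N.

Lemma davenport_bound_gt0 d : davenport_bound d -> 0 < d.
Proof. by move=> Dd; apply: Dd atomB_seq1. Qed.

(* Appending (prod c)^-1 to c gives a zero-sum sequence of length n.+1 > d,
   hence no atom; the factor avoiding the appended entry lies inside c. *)
Lemma davenport_bound_inB_subfamily d n (c : 'I_n -> gT) :
  davenport_bound d -> d <= n -> exists2 Om : {set 'I_n}, Om != set0 & inB (catall1 c Om).
Proof.
move=> Dd dn; set L := catall1 c setT; set z := (\prod_(y <- L) y)^-1.
have sub_other X Y : perm_eq (rcons L z) (X ++ Y) -> z \in Y -> submset X L.
  move=> LXY /perm_to_rem zY; apply/submsetP; exists (rem z Y).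
  rewrite -(perm_cons z) -perm_rcons (permPl LXY) perm_sym -cat1s.
  by rewrite perm_catCA /= perm_cat2l perm_sym.
have L_natom : ~ atomB (rcons L z).
  by move/Dd; rewrite size_rcons size_catall1 cardsT card_ord ltnNge dn.
have L0 : rcons L z <> [::] by case: (L).
have [V [W [VB WB LVW V0 W0]]] := not_atomB (inB_rcons_prodV L) L0 L_natom.
have [X [XB X0 XL]] : exists X, [/\ inB X, X <> [::] & submset X L].
  have : z \in V ++ W by rewrite -(perm_mem LVW) mem_rcons mem_head.
  rewrite mem_cat => /orP [zV | zW]; last by exists V; split=> //; apply: sub_other zW.
  by exists W; split=> //; apply: sub_other zV; rewrite (perm_trans LVW) // perm_catC.
have [Om XOm] := submset_catall1 XL; exists Om; last exact: inB_perm XOm XB.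
apply: contra_notN X0 => /eqP Om0.
by apply/eqP; rewrite -size_eq0 (perm_size XOm) size_catall1 Om0 cards0.
Qed.

Definition omega_bound (b : seq gT) N :=
  forall n (a : 'I_n -> seq gT), (forall i, inB (a i)) -> dvdB b (catall a setT) ->
  exists Om : {set 'I_n}, #|Om| <= N /\ dvdB b (catall a Om).

Lemma omega_bound_mono b m n : m <= n -> omega_bound b m -> omega_bound b n.
Proof.
move=> mn bm k a aB ba; have [Om [Omm bOm]] := bm k a aB ba.
by exists Om; split=> //; apply: leq_trans mn.
Qed.

Lemma atomB_perm_catall_pairs U n (g : 'I_n -> gT) (A : {set 'I_n}) :
  atomB U -> perm_eq U (catall (fun i => [:: g i; (g i)^-1]) A) -> #|A| <= 1.
Proof.
set a := fun i => _; move=> [_ _ Uatom] UA; rewrite leqNgt; apply/negP => A2.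
have [j Aj] : exists j, j \in A by apply/card_gt0P; apply: ltnW.
have UjA : perm_eq U (a j ++ catall a (A :\ j)).
  have -> : a j = catall a (A :&: [set j]).
    by rewrite (setIidPr _) ?sub1set // /catall enum_set1.
  exact: perm_trans UA (perm_catall_setID a A [set j]).
have [] := Uatom _ _ (inB_pair (g j)) (inB_catall _ (fun i => inB_pair (g i))) UjA => //.
move/(congr1 size)/eqP; rewrite size_catall (eq_bigr (fun=> 2)) // sum_nat_const muln_eq0.
by rewrite orbF; move: A2; rewrite (cardsD1 j) Aj add1n ltnS lt0n => /negPf ->.
Qed.

(* U divides the product of the pairs [g_i; g_i^-1] of its entries, and by
   atomicity any subproduct divisible by U must contain every pair. *)
Lemma omega_bound_ge_size U N : atomB U -> 2 < size U -> omega_bound U N -> size U <= N.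
Proof.
move=> Uatom U2 UN; have [UB _ Uirr] := Uatom.
set g := fun i : 'I_(size U) => nth 1 U i; set a := fun i => [:: g i; (g i)^-1].
set E := catall1 g; have UE : E setT = U := catall1_nth U.
have countE A p : count p (catall a A) = count p (E A) + count p (map invg (E A)).
  rewrite count_map /E /catall1 !count_catall -big_split.
  by apply: eq_bigr => i _ /=; rewrite !addn0.
have size_a A : size (catall a A) = (#|A| * 2)%N.
  by rewrite size_catall (eq_bigr (fun=> 2)) // sum_nat_const.
have [Om [OmN [c cB UcE]]] : exists Om : {set 'I_(size U)}, #|Om| <= N /\ dvdB U (catall a Om).
  apply: UN => [i | ]; first exact: inB_pair.
  exists (map invg U); first exact: inB_map_invg UB.
  by apply/seq.permP => p; rewrite countE UE count_cat.
have E_split p : count p U = count p (E Om) + count p (E (~: Om)).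
  by rewrite -count_cat -(seq.permP (perm_catall_setC _ Om)) -[in LHS]UE.
have UcOm : perm_eq U (map invg c ++ catall a (~: Om)).
  have invOm p : count p (map invg (E Om)) = count p (E (~: Om)) + count p c.
    by move: (seq.permP UcE p); rewrite countE count_cat E_split -addnA => /addnI.
  apply/seq.permP => p.
  have EOm : count p (E Om) = count p (map invg (E (~: Om))) + count p (map invg c).
    rewrite !count_map -invOm count_map; apply: eq_count => x /=; by rewrite invgK.
  rewrite count_cat countE E_split EOm.
  by rewrite addnAC addnC (addnC (count p (map invg (E (~: Om))))).
case: (Uirr _ _ (inB_map_invg cB) (inB_catall (~: Om) (fun i => inB_pair (g i))) UcOm).
  move=> c0; rewrite c0 /= in UcOm; have := atomB_perm_catall_pairs Uatom UcOm.
  by move=> OmC1; rewrite (perm_size UcOm) size_a in U2; lia.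
move/(congr1 size)/eqP; rewrite size_a muln_eq0 orbF => /eqP/cards0_eq OmC0.
by rewrite -(setCK Om) OmC0 setC0 cardsT card_ord in OmN.
Qed.

Lemma davenport_bound_of_omega N : 3 <= #|[set: gT]| ->
  (forall u : seq gT, atomB u -> le_enat (omega_elt u) (Some N)) -> davenport_bound N.
Proof.
move=> G3 omegaN.
have atom_le U : atomB U -> 2 < size U -> size U <= N.
  move=> Uatom U2; apply: (omega_bound_ge_size Uatom U2).
  exact: le_infN_Some (omega_bound_mono (b:=U)) (omegaN U Uatom).
have [U3 [U3atom U3size]] := exists_atomB_size3 G3.
move=> U Uatom; have [U2 | U2] := ltnP 2 (size U); first exact: atom_le.
by apply: leq_trans U2 (ltnW _); rewrite -U3size atom_le ?U3size.
Qed.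

Definition small_d_bound d :=
  forall n (S : 'I_n -> seq gT),
  exists Om : {set 'I_n}, #|Om| <= d /\ simB (catall S setT) (catall S Om).

(* At most |b| factors contain b; among the others, at most d have the same
   class as all of them, so the cofactor of b stays zero-sum. *)
Lemma omega_bound_size_add b d : small_d_bound d -> omega_bound b (size b + d).
Proof.
move=> dd n a aB [c cB abc].
have [Om1 [Om1b bOm1]] : exists Om1 : {set 'I_n}, #|Om1| <= size b /\ submset b (catall a Om1).
  by apply: submset_catall_cover; apply/submsetP; exists c.
have /submsetP [R Om1bR] := bOm1.
pose a' i := if i \in Om1 then [::] else a i.
have count_a' A p : count p (catall a' A) = count p (catall a (A :\: Om1)).
  rewrite !count_catall (big_setID Om1) /= big1 ?add0n => [|i]; last first.
    by rewrite inE /a' => /andP [_ ->].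
  by apply: eq_bigr => i; rewrite inE /a' => /andP [/negbTE ->].
have [Om2 [Om2d a'Om2]] := dd n a'.
have cE : perm_eq c (R ++ catall a' setT).
  apply/seq.permP => p; move: (seq.permP abc p) (seq.permP Om1bR p).
  rewrite (seq.permP (perm_catall_setC a Om1)) !count_cat count_a' setTD => e1 e2.
  by rewrite e2 -addnA in e1; rewrite (addnI e1).
exists (Om1 :|: Om2); split.
  by rewrite cardsU (leq_trans (leq_subr _ _)) // leq_add.
exists (R ++ catall a' Om2).
  have : inB (catall a' Om2 ++ R).
    by apply/(a'Om2 R); apply: inB_perm cB; apply: perm_trans cE _; rewrite perm_catC.
  by apply: inB_perm; rewrite perm_catC.
apply/seq.permP => p.
rewrite (seq.permP (perm_catall_setID a (Om1 :|: Om2) Om1)) setUK setDUl setDv set0U.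
by rewrite !count_cat count_a' (seq.permP Om1bR) count_cat addnA.
Qed.

End ZeroSumSequences.

Section AbelianGroup.
Variable K : finGroupType.
Hypothesis K_ab : abelian [set: K].
Local Open Scope group_scope.

Lemma perm_prodg (s t : seq K) : perm_eq s t -> \prod_(x <- s) x = \prod_(x <- t) x.
Proof.
elim: s t => [|x s IHs] t; first by rewrite perm_sym => /perm_nilP ->.
move=> st; have xt : x \in t by rewrite -(perm_mem st) mem_head.
case/splitPr: xt st => t1 t2.
rewrite perm_sym -[x :: t2]cat1s perm_catCA /= perm_cons perm_sym => /IHs sE.
rewrite big_cons sE !big_cat big_cons /= !mulgA; congr (_ * _).
by apply: (centsP K_ab); rewrite inE.
Qed.

Lemma inB_abelian (s : seq K) : inB s <-> \prod_(x <- s) x = 1.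
Proof.
by split=> [[t ts t1] | s1]; [rewrite -(perm_prodg ts) | exists s].
Qed.

End AbelianGroup.

Section Abelianization.
Variable gT : finGroupType.
Local Open Scope group_scope.
Local Notation G' := [~: [set: gT], [set: gT]].

Lemma norm_der1T (x : gT) : x \in 'N(G').
Proof. by rewrite (subsetP (der_norm 1 [set: gT]%G)) ?inE. Qed.

Lemma quotient_der1_abelian : abelian [set: coset_of G'].
Proof. by have := der_abelian 0 [set: gT]%G; rewrite derg0 derg1 quotientT. Qed.

Lemma coset_der1_prod I (r : seq I) (F : I -> gT) :
  coset G' (\prod_(i <- r) F i) = \prod_(i <- r) coset G' (F i).
Proof. by rewrite morph_prod // => i _; apply: norm_der1T. Qed.

Lemma inB_map_coset (s : seq gT) : inB s -> inB (map (coset G') s).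
Proof.
move=> [t ts t1]; exists (map (coset G') t); first exact: perm_map.
by rewrite big_map -coset_der1_prod t1 coset_id.
Qed.

Lemma coset_prod_catall n (S : 'I_n -> seq gT) A :
  coset G' (\prod_(y <- catall S A) y) =
  \prod_(y <- catall1 (fun i => coset G' (\prod_(x <- S i) x)) A) y.
Proof.
rewrite !prod_catall coset_der1_prod; apply: eq_bigr => i _; by rewrite big_seq1.
Qed.

Lemma simB_coset_prod (S S' : seq gT) :
  simB S S' -> coset G' (\prod_(y <- S) y) = coset G' (\prod_(y <- S') y).
Proof.
move=> SS'; set p := \prod_(y <- S) y.
have /inB_map_coset : inB (S' ++ [:: p^-1]) by apply/SS'; rewrite cats1; apply: inB_rcons_prodV.
move/(inB_abelian quotient_der1_abelian).
rewrite map_cat big_cat big_map big_seq1 -coset_der1_prod morphV ?norm_der1T //=.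
by move/eqP; rewrite -eq_mulgV1 => /eqP.
Qed.

Definition big_D_bound l :=
  1 <= l /\ forall n, l <= n -> forall S : 'I_n -> seq gT,
  exists2 Om : {set 'I_n}, Om \proper setT & simB (catall S setT) (catall S Om).

(* Lift A = x :: A' to G; the proper subfamily granted by [big_D_bound] has
   the same product as A' in G/G', so its complement in A' is zero-sum and
   splits A. *)
Lemma big_D_bound_davenport l : big_D_bound l -> davenport_bound (coset_of G') l.
Proof.
move=> [_ lD] A [AB A0 Airr]; rewrite leqNgt; apply/negP => lA.
case: A AB A0 Airr lA => [|x A'] // AB _ Airr lA.
set c := fun i : 'I_(size A') => nth 1 A' i.
have [Om OmT simOm] := lD _ lA (fun i => [:: repr (c i)]).
have prod_c B : coset G' (\prod_(y <- catall (fun i => [:: repr (c i)]) B) y) =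
                \prod_(y <- catall1 c B) y.
  by rewrite coset_prod_catall; congr bigop; apply: eq_catall => i /=; rewrite big_seq1 coset_reprK.
have A'E : perm_eq A' (catall1 c Om ++ catall1 c (~: Om)).
  by rewrite -{1}(catall1_nth A'); apply: perm_catall_setC.
have prodC : \prod_(y <- catall1 c (~: Om)) y = 1.
  have := simB_coset_prod simOm; rewrite !prod_c catall1_nth.
  rewrite (perm_prodg quotient_der1_abelian A'E) big_cat /=.
  by rewrite -{2}(mulg1 (\prod_(y <- catall1 c Om) y)) => /mulgI.
have AB' : \prod_(y <- x :: catall1 c Om) y = 1.
  move/(inB_abelian quotient_der1_abelian): AB.
  by rewrite !big_cons (perm_prodg quotient_der1_abelian A'E) big_cat /= prodC mulg1.
case: (Airr (catall1 c (~: Om)) (x :: catall1 c Om)) => //.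
- exact: (inB_abelian quotient_der1_abelian _).2 prodC.
- exact: (inB_abelian quotient_der1_abelian _).2 AB'.
- by rewrite perm_sym perm_catC /= perm_cons perm_sym.
move/(congr1 size)/eqP; rewrite size_catall1 cards_eq0 => /eqP OmC0.
by move: OmT; rewrite properT -(setCK Om) OmC0 setC0 eqxx.
Qed.

Lemma simB_abelian (S S' : seq gT) : abelian [set: gT] ->
  \prod_(y <- S) y = \prod_(y <- S') y -> simB S S'.
Proof. by move=> Gab SS' T; rewrite !(inB_abelian Gab) !big_cat /= SS'. Qed.

Lemma davenport_big_D_bound d :
  abelian [set: gT] -> davenport_bound (coset_of G') d -> big_D_bound d.
Proof.
move=> Gab Dd; split=> [|n dn S]; first exact: davenport_bound_gt0 Dd.
have [Om Om0 OmB] := davenport_bound_inB_subfamily (fun i => coset G' (\prod_(x <- S i) x)) Dd dn.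
have prodOm : \prod_(y <- catall S Om) y = 1.
  have : coset G' (\prod_(y <- catall S Om) y) = 1.
    by rewrite coset_prod_catall; apply/(inB_abelian quotient_der1_abelian).
  by move/(coset_idr (norm_der1T _)) => /=; rewrite (commG1P Gab) inE => /eqP.
exists (~: Om).
  by rewrite properT; apply: contra Om0 => /eqP OmC; rewrite -(setCK Om) OmC setCT.
apply: (simB_abelian Gab).
by rewrite (perm_prodg Gab (perm_catall_setC S Om)) big_cat /= prodOm mul1g.
Qed.

End Abelianization.

Theorem proposition5p12 (gT : finGroupType) (hG : (3 <= #|[set: gT]|)%N) :
  (le_enat (Davenport gT) (omegaG gT) /\
   le_enat (omegaG gT) (add_enat (Davenport gT) (small_d_C gT))) /\
  (le_enat (Davenport (coset_of [~: [set: gT], [set: gT]]%g)) (big_D_C gT) /\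
   (abelian [set: gT] ->
    Davenport (coset_of [~: [set: gT], [set: gT]]%g) = big_D_C gT)).
Proof.
split; [split | split].
- by apply: le_infN => N; apply: davenport_bound_of_omega.
- case eD: (Davenport gT) => [D|]; last by case: (omegaG gT).
  case ed: (small_d_C gT) => [d|]; last by case: (omegaG gT).
  apply: infN_le => u /(infN_spec eD) uD; apply: infN_le.
  have uDd : size u + d <= D + d by rewrite leq_add2r.
  exact: omega_bound_mono uDd (@omega_bound_size_add _ u d (infN_spec ed)).
- exact/le_infN/big_D_bound_davenport.
- move=> Gab; apply: le_enat_anti; first exact/le_infN/big_D_bound_davenport.
  by apply: le_infN => d; apply: davenport_big_D_bound.
Qed.
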